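(* Let $b$ be a topologically nilpotent element of a complex Banach algebra. Then $b$ is nilpotent if and only if $e^b-1$ is nilpotent. Moreover, for every $d\in\mathbb{N}$, $b^d=0$ if and only if $(e^b-1)^d=0$.
   Context: An element $b$ of a Banach algebra is topologically nilpotent if $\|b^n\|^{1/n}\to0$ as $n\to\infty$. $e^b=\sum_{n\ge0}b^n/n!$, computed in the algebra or in its unitization. *)

From HB Require Import structures.
From mathcomp Require Import all_boot all_order all_algebra.
From mathcomp Require Import all_classical all_reals all_analysis.
From mathcomp.real_closed Require Import complex.
Set Implicit Arguments. Unset Strict Implicit. Unset Printing Implicit Defensive.
Import Order.TTheory GRing.Theory Num.Theory.
Import numFieldNormedType.Exports.
Local Open Scope ring_scope.

HB.instance Definition _ (R : rcfType) := NormedModule.copy R[i] R[i]^o.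
Local Open Scope complex_scope.
Local Open Scope classical_set_scope.

Definition banach_mul (R : realType) (A : completeNormedModType R[i])
    (mul : A -> A -> A) : Prop :=
  [/\ associative mul,
      (forall (a : R[i]) (x y z : A), mul (a *: x + y) z = a *: mul x z + mul y z),
      (forall (a : R[i]) (x y z : A), mul z (a *: x + y) = a *: mul z x + mul z y)
    & (forall x y : A, `|mul x y| <= `|x| * `|y|)].

(* The unitization C x A: (l, x) stands for l*1 + x. *)
Definition umul (R : realType) (A : completeNormedModType R[i])
    (mul : A -> A -> A) (x y : R[i] * A) : R[i] * A :=
  (x.1 * y.1, x.1 *: y.2 + y.1 *: x.2 + mul x.2 y.2).

Definition upow (R : realType) (A : completeNormedModType R[i])
    (mul : A -> A -> A) (x : R[i] * A) (n : nat) : R[i] * A :=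
  iter n (umul mul x) (1, 0).

Definition bpow (R : realType) (A : completeNormedModType R[i])
    (mul : A -> A -> A) (b : A) (n : nat) : R[i] * A :=
  upow mul (0, b) n.

Definition topologically_nilpotent (R : realType) (A : completeNormedModType R[i])
    (mul : A -> A -> A) (b : A) : Prop :=
  (fun n : nat => n.-root `|(bpow mul b n).2|) @ \oo --> (0 : R[i]).

Definition nilpotent_el (R : realType) (A : completeNormedModType R[i])
    (mul : A -> A -> A) (b : A) : Prop :=
  exists n : nat, bpow mul b n = (0, 0).

(* e^b - 1 = sum_{n>=1} b^n / n!, an element of A
   (the n = 0 term (bpow mul b 0).2 is 0). *)
Definition expm1 (R : realType) (A : completeNormedModType R[i])
    (mul : A -> A -> A) (b : A) : A :=
  limn (series (fun n : nat => (n`!%:R : R[i])^-1 *: (bpow mul b n).2)).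

From HB Require Import structures.
From mathcomp Require Import all_boot all_order all_algebra.
From mathcomp Require Import all_classical all_reals all_analysis.
From mathcomp.real_closed Require Import complex.
Import Order.TTheory GRing.Theory Num.Theory.
Import numFieldNormedType.Exports.
Local Open Scope ring_scope.
Local Open Scope complex_scope.
Local Open Scope classical_set_scope.
Set Implicit Arguments. Unset Strict Implicit. Unset Printing Implicit Defensive.

(* In the unitization C x A put B = (0, b).  Splitting off the first two
   terms of the exponential series gives e^b - 1 = B (1 + B Q) with
   Q = (1/2, w), w = sum_m b^(m+1) / (m+3)!, and Q commutes with B.  Hence
   (e^b - 1)^d = B^d (1 + B Q)^d = B^d (1 + B P) for some P commuting with B,
   so b^d = 0 forces (e^b - 1)^d = 0.  Conversely, if (e^b - 1)^d = 0 then
   B^d = B^d (B (-P)), hence B^d = B^d B^k (-P)^k for every k; as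
   ||B^k||^(1/k) -> 0, some k has ||B^k|| ||P||^k <= 1/2, and then
   ||B^d|| <= ||B^d|| / 2.  Topological nilpotence also makes the series
   defining w converge, by comparison with a geometric series. *)

Lemma expr1D_mul_comm (T : nzRingType) (B Q : T) d : GRing.comm B Q ->
  exists2 P, GRing.comm B P & (1 + B * Q) ^+ d = 1 + B * P.
Proof.
move=> cBQ; elim: d => [|d [P cBP IHd]].
  by exists 0; [exact: commr0 | rewrite mulr0 addr0].
exists (P + Q + P * (B * Q)).
  have cBBQ : GRing.comm B (B * Q) by apply: commrM => //; exact: commr_refl.
  by apply: commrD; [apply: commrD | apply: commrM].
by rewrite exprSr IHd mulrDr mulr1 mulrDl mul1r !mulrDr -!mulrA !addrA.
Qed.

Lemma klipschitz_continuous (K : numFieldType) (V W : normedModType K) (k : K)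
    (f : V -> W) : 0 <= k -> k.-lipschitz f -> continuous f.
Proof.
move=> k_ge0 fk x; apply/cvgrPdist_lt => e e_gt0.
have k1_gt0 : 0 < k + 1 by rewrite ltr_wpDl.
near=> y; rewrite (le_lt_trans (fk (x, y) _)) //=.
rewrite (@le_lt_trans _ _ ((k + 1) * `|x - y|)) ?ler_wpM2r ?lerDl //.
rewrite -ltr_pdivlMl //; near: y.
by apply: (@cvgr_dist_lt _ _ _ _ _ id); rewrite ?mulr_gt0 ?invr_gt0.
Unshelve. all: by end_near.
Qed.

Lemma geometric_sum_le (K : numDomainType) (d : K) m n :
  0 <= d -> d *+ 2 <= 1 -> \sum_(m <= k < n) d ^+ k <= d ^+ m *+ 2.
Proof.
move=> d_ge0 d2_le1.
have bound j : \sum_(m <= k < m + j) d ^+ k + d ^+ (m + j) *+ 2 <= d ^+ m *+ 2.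
  elim: j => [|j]; first by rewrite addn0 big_geq // add0r.
  apply: le_trans; rewrite addnS big_nat_recr ?leq_addr //= -addrA lerD2l.
  rewrite exprS -mulrnAl [leRHS]mulr2n lerD2l.
  by rewrite -[leRHS]mul1r ler_wpM2r // exprn_ge0.
have [nm|mn] := leqP n m; first by rewrite big_geq // mulrn_wge0 // exprn_ge0.
rewrite -(subnKC (ltnW mn)); apply: le_trans (bound (n - m)%N).
by rewrite lerDl mulrn_wge0 // exprn_ge0.
Qed.

Lemma series_cvg_small_powers (K : numFieldType) (V : completeNormedModType K)
    (u : V ^nat) :
  (forall d, 0 < d -> \forall n \near \oo, `|u n| <= d ^+ n) -> cvgn (series u).
Proof.
move=> small; apply/cauchy_cvgP/cauchy_seriesP => e e_gt0.
have e1_gt0 : 0 < e + 1 by rewrite ltr_wpDl ?ltW.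
pose t := e / (e + 1); pose d := t / 2.
have t_lt_e : t < e by rewrite ltr_pdivrMr // ltr_pMr // ltrDr.
have d2 : d *+ 2 = t by rewrite mulr2n -splitr.
have d_gt0 : 0 < d by rewrite !divr_gt0.
have t_le1 : t <= 1 by rewrite ler_pdivrMr // mul1r lerDl.
have d_le1 : d <= 1 by apply: le_trans t_le1; rewrite -d2 mulr2n lerDl ltW.
have [N _ uN] := small d d_gt0.
rewrite -near2_pair; near=> n1 n2 => /=.
have Nn1 : (maxn N 1 <= n1)%N by near: n1; exact: nbhs_infty_ge.
have [n12|/ltnW n21] := leqP n1 n2; last by rewrite big_geq ?normr0.
rewrite (le_lt_trans (ler_norm_sum _ _ _)) // (le_lt_trans _ t_lt_e) //.
apply: (le_trans (y := \sum_(n1 <= k < n2) d ^+ k)).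
  rewrite big_nat_cond [leRHS]big_nat_cond; apply: ler_sum => k /andP[/andP[n1k _] _].
  by apply: uN; rewrite /= (leq_trans _ n1k) // (leq_trans (leq_maxl N 1)).
rewrite (le_trans (@geometric_sum_le _ d n1 n2 (ltW d_gt0) _)) ?d2 //.
rewrite -d2 lerMn2r /= -[leRHS]expr1 ler_wiXn2l ?(ltW d_gt0) //.
exact: leq_trans (leq_maxr N 1) Nn1.
Unshelve. all: by end_near.
Qed.

Section BanachMul.
Variables (R : realType) (A : completeNormedModType R[i]) (mul : A -> A -> A).
Hypothesis hmul : banach_mul mul.

Lemma bmulA : associative mul.
Proof. by case: hmul. Qed.

Lemma bmulZDl a x y z : mul (a *: x + y) z = a *: mul x z + mul y z.
Proof. by case: hmul. Qed.

Lemma bmulZDr a x y z : mul z (a *: x + y) = a *: mul z x + mul z y.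
Proof. by case: hmul. Qed.

Lemma norm_bmul_le x y : `|mul x y| <= `|x| * `|y|.
Proof. by case: hmul. Qed.

Lemma bmulDl x y z : mul (x + y) z = mul x z + mul y z.
Proof. by have := bmulZDl 1 x y z; rewrite !scale1r. Qed.

Lemma bmulDr x y z : mul z (x + y) = mul z x + mul z y.
Proof. by have := bmulZDr 1 x y z; rewrite !scale1r. Qed.

Lemma bmul0l z : mul 0 z = 0.
Proof. by apply/esym/(addrI (mul 0 z)); rewrite -bmulDl !addr0. Qed.

Lemma bmul0r z : mul z 0 = 0.
Proof. by apply/esym/(addrI (mul z 0)); rewrite -bmulDr !addr0. Qed.

Lemma bmulZl a x z : mul (a *: x) z = a *: mul x z.
Proof. by rewrite -[a *: x]addr0 bmulZDl bmul0l addr0. Qed.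

Lemma bmulZr a x z : mul z (a *: x) = a *: mul z x.
Proof. by rewrite -[a *: x]addr0 bmulZDr bmul0r addr0. Qed.

Lemma bmulBl x y z : mul (x - y) z = mul x z - mul y z.
Proof. by rewrite bmulDl -scaleN1r bmulZl scaleN1r. Qed.

Lemma bmulBr x y z : mul z (x - y) = mul z x - mul z y.
Proof. by rewrite bmulDr -scaleN1r bmulZr scaleN1r. Qed.

Lemma bmul_suml I (r : seq I) (P : pred I) (F : I -> A) z :
  mul (\sum_(i <- r | P i) F i) z = \sum_(i <- r | P i) mul (F i) z.
Proof. by apply: (big_morph (mul^~ z)) => [x y|]; [exact: bmulDl | exact: bmul0l]. Qed.

Lemma bmul_sumr I (r : seq I) (P : pred I) (F : I -> A) z :
  mul z (\sum_(i <- r | P i) F i) = \sum_(i <- r | P i) mul z (F i).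
Proof. by apply: (big_morph (mul z)) => [x y|]; [exact: bmulDr | exact: bmul0r]. Qed.

Lemma bmull_continuous z : continuous (mul z).
Proof.
apply: (klipschitz_continuous (normr_ge0 z)) => -[x y] _ /=.
by rewrite -bmulBr norm_bmul_le.
Qed.

Lemma bmulr_continuous z : continuous (mul^~ z).
Proof.
apply: (klipschitz_continuous (normr_ge0 z)) => -[x y] _ /=.
by rewrite -bmulBl mulrC norm_bmul_le.
Qed.

Lemma umulA : associative (umul mul).
Proof.
move=> [a x] [b y] [c z]; rewrite /umul /=; congr (_, _); first by rewrite mulrA.
rewrite !scalerDr !bmulDl !bmulDr !bmulZl !bmulZr !scalerA bmulA.
rewrite (mulrC c a) (mulrC c b).
by rewrite (AC (4*3) (1*(2*4*6)*(3*5*7))).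
Qed.

End BanachMul.

(* The proof of [banach_mul mul] is a parameter so that the ring instance on
   the unitization may use it. *)
Definition unitization (R : realType) (A : completeNormedModType R[i])
  (mul : A -> A -> A) of banach_mul mul : Type := (R[i] * A)%type.

HB.instance Definition _ R A mul hmul :=
  GRing.Zmodule.copy (@unitization R A mul hmul) (R[i] * A)%type.

Section Unitization.
Variables (R : realType) (A : completeNormedModType R[i]) (mul : A -> A -> A).
Hypothesis hmul : banach_mul mul.
Local Notation U := (unitization hmul).

Let umul1l : left_id ((1, 0) : U) (umul mul).
Proof.
by move=> [a x]; rewrite /umul /= mul1r scale1r scaler0 (bmul0l hmul) ?addr0.
Qed.

Let umul1r : right_id ((1, 0) : U) (umul mul).
Proof.
by move=> [a x]; rewrite /umul /= mulr1 scale1r scaler0 (bmul0r hmul) ?add0r ?addr0.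
Qed.

Let umulDl : left_distributive (umul mul : U -> U -> U) +%R.
Proof.
move=> [a x] [b y] [c z]; rewrite /umul /=; congr (_, _); first exact: mulrDl.
by rewrite /= scalerDl scalerDr (bmulDl hmul) (AC (2*2*2) ((1*3*5)*(2*4*6))).
Qed.

Let umulDr : right_distributive (umul mul : U -> U -> U) +%R.
Proof.
move=> [a x] [b y] [c z]; rewrite /umul /=; congr (_, _); first exact: mulrDr.
by rewrite /= scalerDl scalerDr (bmulDr hmul) (AC (2*2*2) ((1*3*5)*(2*4*6))).
Qed.

Let unitization_nontrivial : ((1, 0) : U) != 0.
Proof. by apply/eqP => -[] /eqP; rewrite oner_eq0. Qed.

HB.instance Definition _ := GRing.Zmodule_isNzRing.Build U
  (umulA hmul) umul1l umul1r umulDl umulDr unitization_nontrivial.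

Lemma upowE (x : U) n : upow mul x n = x ^+ n.
Proof. by elim: n => [//|n IHn]; rewrite exprS -IHn. Qed.

Definition unorm (x : U) : R[i] := `|x.1| + `|x.2|.

Lemma unorm_ge0 x : 0 <= unorm x.
Proof. exact: addr_ge0. Qed.

Lemma unorm_eq0 x : (unorm x == 0) = (x == 0).
Proof.
case: x => a x; rewrite /unorm paddr_eq0 // !normr_eq0 /=.
by rewrite -pair_eqE /= -/(_ == _).
Qed.

Lemma unorm1 : unorm 1 = 1.
Proof. by rewrite /unorm normr1 normr0 addr0. Qed.

Lemma unormM x y : unorm (x * y) <= unorm x * unorm y.
Proof.
case: x y => [a x] [b y]; rewrite /unorm /= normrM mulrDl !mulrDr -!addrA lerD2l.
rewrite (le_trans (ler_normD _ _)) // lerD ?normrZ //.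
rewrite (le_trans (ler_normD _ _)) // lerD ?normrZ ?(mulrC `|b|) //.
exact: (norm_bmul_le hmul).
Qed.

Lemma unormX x n : unorm (x ^+ n) <= unorm x ^+ n.
Proof.
elim: n => [|n IHn]; first by rewrite !expr0 unorm1.
by rewrite !exprS (le_trans (unormM _ _)) // ler_wpM2l ?unorm_ge0.
Qed.

End Unitization.

Section TopologicallyNilpotent.
Variables (R : realType) (A : completeNormedModType R[i]) (mul : A -> A -> A).
Hypothesis hmul : banach_mul mul.
Variable b : A.
Local Notation U := (unitization hmul).
Local Notation B := ((0, b) : U).
Local Notation p n := (bpow mul b n).2.

Lemma bpowE n : bpow mul b n = B ^+ n.
Proof. exact: upowE. Qed.

Lemma bpowS n : bpow mul b n.+1 = (0, p n.+1).
Proof. by rewrite /bpow /upow iterS /umul /= mul0r. Qed.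

Lemma bpow1 : p 1 = b.
Proof. by rewrite /= /umul /= scaler0 scale1r (bmul0r hmul) add0r addr0. Qed.

Lemma bpowSS n : p n.+2 = mul b (p n.+1).
Proof.
rewrite {1}/bpow /upow iterS -/(upow _ _ _) -/(bpow _ _ _) bpowS.
by rewrite /umul /= !scale0r !add0r.
Qed.

Lemma bpow_comm n : mul b (p n) = mul (p n) b.
Proof.
case: n => [|n]; first by rewrite (bmul0r hmul) (bmul0l hmul).
have := congr1 snd (commrX n.+1 (commr_refl B)).
by rewrite -bpowE bpowS /GRing.mul /= /umul /= !scale0r !add0r.
Qed.

Lemma unorm_bpowS n : unorm (B ^+ n.+1) = `|p n.+1|.
Proof. by rewrite -bpowE bpowS /unorm normr0 add0r. Qed.

Hypothesis b_topnil : topologically_nilpotent mul b.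

Lemma topnil_small_powers d : 0 < d -> \forall n \near \oo, `|p n| <= d ^+ n.
Proof.
move=> d_gt0; near=> n.
have n_gt0 : (0 < n)%N by near: n; exact: nbhs_infty_gt.
have : `|0 - n.-root `|p n| | < d.
  by near: n; exact: (cvgrPdist_lt _ _).1 b_topnil d d_gt0.
rewrite sub0r normrN ger0_norm ?rootC_ge0 // => root_lt.
have -> : `|p n| = n.-root `|p n| ^+ n by rewrite rootCK.
by rewrite lerXn2r ?nnegrE ?rootC_ge0 ?normr_ge0 ?ltW.
Unshelve. all: by end_near.
Qed.

Lemma topnil_rfixed_eq0 (X P : U) : GRing.comm B P -> X = X * (B * P) -> X = 0.
Proof.
move=> cBP XBP; pose M := unorm P.
have M1_gt0 : 0 < M + 1 by rewrite ltr_wpDl ?unorm_ge0.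
pose d := 2^-1 / (M + 1).
have d_gt0 : 0 < d by rewrite divr_gt0 // invr_gt0 ltr0n.
have dM_le : d * M <= 2^-1.
  by rewrite mulrAC ler_pdivrMr // ler_wpM2l ?invr_ge0 ?ler0n // lerDl.
have [k _ /(_ k.+1 (leqnSn k)) /= Bk_small] := topnil_small_powers d_gt0.
have XBkPk : X = X * (B ^+ k.+1 * P ^+ k.+1).
  rewrite -exprMn_comm //; elim: k.+1 => [|j IHj]; first by rewrite mulr1.
  by rewrite exprS mulrA -XBP.
have BkPk_small : unorm (B ^+ k.+1 * P ^+ k.+1) <= 2^-1.
  rewrite (le_trans (unormM _ _)) // unorm_bpowS.
  rewrite (le_trans (ler_pM _ _ Bk_small (unormX _ _))) ?normr_ge0 ?unorm_ge0 //.
  have dM_ge0 : 0 <= d * M by rewrite mulr_ge0 ?unorm_ge0 ?ltW.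
  have dM_le1 : d * M <= 1 by apply: (le_trans dM_le); rewrite invf_le1 ?ler1n.
  by rewrite -exprMn (le_trans _ dM_le) // -[leRHS]expr1 ler_wiXn2l.
have : unorm X <= unorm X * 2^-1.
  by rewrite {1}XBkPk (le_trans (unormM _ _)) // ler_wpM2l ?unorm_ge0.
rewrite {1}[unorm X]splitr gerDl pmulr_lle0 ?invr_gt0 ?ltr0n // => X_le0.
by apply/eqP; rewrite -unorm_eq0 eq_le X_le0 unorm_ge0.
Qed.

Let expm1_term n := (n`!%:R : R[i])^-1 *: p n.
Let tail_term m := ((m.+3)`!%:R : R[i])^-1 *: p m.+1.

Definition expm1_tail : A := limn (series tail_term).

Lemma expm1_partial_sumE N :
  series expm1_term N.+3 = b + mul b (2^-1 *: b + mul b (series tail_term N)).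
Proof.
rewrite /series /= !big_nat_recl // /expm1_term scaler0 add0r bpow1 invr1 scale1r.
rewrite bpowSS bpow1 (bmulDr hmul) (bmulZr hmul) !(bmul_sumr hmul); congr (_ + (_ + _)).
by apply: eq_bigr => i _; rewrite /tail_term !(bmulZr hmul) -!bpowSS.
Qed.

Lemma expm1_tail_cvg : series tail_term @ \oo --> expm1_tail.
Proof.
apply: series_cvg_small_powers => d d_gt0.
have d1_gt0 : 0 < d + 1 by rewrite ltr_wpDl ?ltW.
pose e := d / (d + 1).
have e_gt0 : 0 < e by rewrite divr_gt0.
have e_le1 : e <= 1 by rewrite ler_pdivrMr // mul1r lerDl.
have e_le_d : e <= d by rewrite ler_pdivrMr // ler_peMr ?lerDr ?ltW.
have [N _ pN] := topnil_small_powers e_gt0.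
exists N => // m /= Nm.
have fact_inv_le1 : ((m.+3)`!%:R : R[i])^-1 <= 1.
  by rewrite invf_le1 ?ler1n ?ltr0n fact_gt0.
rewrite normrZ ger0_norm ?invr_ge0 ?ler0n // (le_trans (ler_piMl _ fact_inv_le1)) //.
rewrite (le_trans (pN _ (leqW Nm))) //.
rewrite (le_trans (ler_wiXn2l (ltW e_gt0) e_le1 (leqnSn m))) //.
by rewrite lerXn2r ?nnegrE ?(ltW e_gt0) ?(ltW d_gt0).
Qed.

Lemma expm1E : expm1 mul b = b + mul b (2^-1 *: b + mul b expm1_tail).
Proof.
apply: cvg_lim; first exact: norm_hausdorff.
rewrite -(cvg_shiftn 3).
under eq_fun do rewrite addn3 expm1_partial_sumE.
apply: cvgD; first exact: cvg_cst.
apply: continuous_cvg; first exact: bmull_continuous.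
apply: cvgD; first exact: cvg_cst.
apply: continuous_cvg; [exact: bmull_continuous | exact: expm1_tail_cvg].
Qed.

Lemma expm1_tail_comm : mul b expm1_tail = mul expm1_tail b.
Proof.
have tail_comm : mul b \o series tail_term = mul^~ b \o series tail_term.
  apply: funext => N /=; rewrite (bmul_sumr hmul) (bmul_suml hmul).
  by apply: eq_bigr => k _; rewrite (bmulZr hmul) (bmulZl hmul) bpow_comm.
have lim_l : mul b \o series tail_term @ \oo --> mul b expm1_tail.
  by apply: continuous_cvg; [exact: bmull_continuous | exact: expm1_tail_cvg].
have lim_r : mul^~ b \o series tail_term @ \oo --> mul expm1_tail b.
  by apply: continuous_cvg; [exact: bmulr_continuous | exact: expm1_tail_cvg].
by rewrite tail_comm in lim_l; exact: cvg_unique lim_l lim_r.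
Qed.

Lemma unitization_expm1 :
  ((0, expm1 mul b) : U) = B * (1 + B * ((2^-1, expm1_tail) : U)).
Proof.
by rewrite expm1E /GRing.mul /= /umul /= !mul0r !scale0r !add0r addr0 scale1r.
Qed.

Lemma bpow_eq0_expm1 d :
  bpow mul b d = (0, 0) <-> bpow mul (expm1 mul b) d = (0, 0).
Proof.
pose Q : U := (2^-1, expm1_tail).
have cBQ : GRing.comm B Q.
  rewrite /GRing.comm /GRing.mul /= /umul /= mul0r mulr0 !scale0r add0r addr0.
  by rewrite expm1_tail_comm.
have cB1BQ : GRing.comm B (1 + B * Q).
  by apply: commrD; [exact: commr1 | apply: commrM; first exact: commr_refl].
have [P cBP expr1BQ] := expr1D_mul_comm d cBQ.
rewrite bpowE /bpow upowE unitization_expm1 exprMn_comm // expr1BQ.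
change (B ^+ d = 0 <-> B ^+ d * (1 + B * P) = 0).
split=> [-> | ]; first by rewrite mul0r.
rewrite mulrDr mulr1 => /eqP; rewrite addr_eq0 => /eqP Bd.
apply: (@topnil_rfixed_eq0 _ (- P)); first exact: commrN.
by rewrite !mulrN -Bd.
Qed.

End TopologicallyNilpotent.

Theorem lemma5 (R : realType) (A : completeNormedModType R[i])
    (mul : A -> A -> A) (hmul : banach_mul mul) (b : A)
    (htn : topologically_nilpotent mul b) :
  (nilpotent_el mul b <-> nilpotent_el mul (expm1 mul b)) /\
  (forall d : nat, bpow mul b d = (0, 0) <-> bpow mul (expm1 mul b) d = (0, 0)).
Proof.
have eq0_iff := bpow_eq0_expm1 hmul htn.
split=> //; split=> -[d /eq0_iff]; by exists d.
Qed.
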